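(* Let $n,d,r$ be positive integers with $r\le d\le n$. Let $F\in\mathbb{R}^{d\times n}$ have rank $d$, with compact SVD $F=U_F\Sigma_F V_F^\top$ ($V_F\in\mathbb{R}^{n\times d}$ with orthonormal columns), and suppose $\max_{i}\|e_i^\top V_F\|_2\le \mu\sqrt{d/n}$; let $\kappa=\sigma_{\max}(F)/\sigma_{\min}(F)$. Let $W^*\in\mathbb{R}^{d\times d}$ be symmetric of rank $r$ with $\|W^*\|_2\le c_W$, $L^*=F^\top W^*F$, let $S^*\in\mathbb{R}^{n\times n}$ be symmetric with at most $z$ nonzero entries per row and per column, $z\le n/(20\mu^2d\kappa)$, and let $N^*\in\mathbb{R}^{n\times n}$ be symmetric with $\|N^*\|_\infty\le1/(40\mu^2d\kappa^2)$. Let $M=L^*+S^*+N^*$. Let $t\ge1$ be an integer, let $\zeta_t=\mu^2\sigma_{\max}^2(F)\frac{d}{n}\frac{c_W}{5^{t-1}}+(3\mu^2d\kappa^2+1)\|N^*\|_\infty$, and let $L_{t-1}\in\mathbb{R}^{n\times n}$ satisfy $\|L^*-L_{t-1}\|_\infty\le\mu^2\sigma_{\max}^2(F)\frac{d}{n}\frac{c_W}{5^{t-1}}+3\mu^2d\kappa^2\|N^*\|_\infty$. Define $S_t=\mathcal{P}_{\zeta_t}(M-L_{t-1})$. Then $\|S^*-S_t\|_\infty\le2\mu^2\sigma_{\max}^2(F)\frac{d}{n}\frac{c_W}{5^{t-1}}+2(3\mu^2d\kappa^2+1)\|N^*\|_\infty$ and $\operatorname{Supp}(S_t)\subseteq\operatorname{Supp}(S^*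 )$.
   Context: $e_i$ is the $i$-th standard basis vector; $\sigma_{\max}(F),\sigma_{\min}(F)$ are the largest and smallest of the $d$ singular values of $F$. $\|A\|_\infty=\max_{i,j}|A_{ij}|$, $\|A\|_2$ is the spectral norm, $\operatorname{Supp}(A)$ is the set of indices of nonzero entries. For $a\ge0$, $\mathcal{P}_a(A)$ is entrywise hard thresholding: $(\mathcal{P}_a(A))_{ij}=A_{ij}$ if $|A_{ij}|>a$ and $0$ otherwise. *)

From HB Require Import structures.
From mathcomp Require Import all_boot all_order all_algebra.
From mathcomp Require Import classical_sets reals.
Set Implicit Arguments. Unset Strict Implicit. Unset Printing Implicit Defensive.
Import Order.TTheory GRing.Theory Num.Theory.
Local Open Scope ring_scope.
Local Open Scope classical_set_scope.

Section Defs.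
Variable R : realType.

Definition cnorm2 (m : nat) (x : 'cV[R]_m) : R :=
  Num.sqrt (\sum_(i < m) (x i 0) ^+ 2).

Definition rnorm2 (m : nat) (x : 'rV[R]_m) : R :=
  Num.sqrt (\sum_(j < m) (x 0 j) ^+ 2).

Definition spec_norm (m n : nat) (A : 'M[R]_(m, n)) : R :=
  sup [set e | exists x : 'cV[R]_n, cnorm2 x <= 1 /\ e = cnorm2 (A *m x)].

Definition max_norm (m n : nat) (A : 'M[R]_(m, n)) : R :=
  \big[Num.max/0]_(i < m) \big[Num.max/0]_(j < n) `|A i j|.

Definition hard_thr (m n : nat) (a : R) (A : 'M[R]_(m, n)) : 'M[R]_(m, n) :=
  \matrix_(i, j) (if a < `|A i j| then A i j else 0).

Definition supp (m n : nat) (A : 'M[R]_(m, n)) : set ('I_m * 'I_n) :=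
  [set ij | A ij.1 ij.2 != 0].

Definition compact_svd (d n : nat) (F : 'M[R]_(d, n)) (U : 'M[R]_d)
  (s : 'rV[R]_d) (V : 'M[R]_(n, d)) : Prop :=
  [/\ U^T *m U = 1%:M, V^T *m V = 1%:M, (forall i, 0 < s 0 i) &
      F = U *m diag_mx s *m V^T].

Definition sv_max (d : nat) (s : 'rV[R]_d) : R := \big[Num.max/0]_(i < d) s 0 i.
Definition sv_min (d : nat) (s : 'rV[R]_d) : R :=
  \big[Num.min/sv_max s]_(i < d) s 0 i.

End Defs.

(* Write M - L_{t-1} = S^* + E with E = (L^* - L_{t-1}) + N^*; by the triangle
   inequality ||E||_oo <= zeta_t.  Hard thresholding a perturbation S^* + E at
   a level a >= ||E||_oo keeps no entry outside the support of S^* (there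
   |S^* + E| = |E| <= a), and moves every entry of S^* by at most 2a: a kept
   entry differs from S^* by E, a killed one has |S^*| <= |S^* + E| + |E| <= 2a. *)

From HB Require Import structures.
From mathcomp Require Import all_boot all_order all_algebra.
From mathcomp Require Import classical_sets reals.
From mathcomp Require Import lra.
Set Implicit Arguments. Unset Strict Implicit. Unset Printing Implicit Defensive.
Import Order.TTheory GRing.Theory Num.Theory.
Local Open Scope ring_scope.
Local Open Scope classical_set_scope.

Section MaxNorm.
Variables (R : realType) (m n : nat).
Implicit Types A B : 'M[R]_(m, n).

Lemma max_norm_ge0 A : 0 <= max_norm A.
Proof. exact: bigmax_ge_id. Qed.

Lemma le_max_norm A i j : `|A i j| <= max_norm A.
Proof.
apply: le_trans (le_bigmax _ _ i).
exact: (le_bigmax _ (fun j => `|A i j|) j).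
Qed.

Lemma max_norm_le A (b : R) :
  0 <= b -> (forall i j, `|A i j| <= b) -> max_norm A <= b.
Proof. by move=> b0 Ab; apply: bigmax_le => // i _; apply: bigmax_le. Qed.

Lemma le_max_normD A B : max_norm (A + B) <= max_norm A + max_norm B.
Proof.
apply: max_norm_le => [|i j]; first by rewrite addr_ge0 ?max_norm_ge0.
by rewrite mxE (le_trans (ler_normD _ _)) // lerD ?le_max_norm.
Qed.

End MaxNorm.

Section HardThresholdPerturbation.
Variables (R : realType) (m n : nat) (a : R) (S E : 'M[R]_(m, n)).
Hypothesis E_le : max_norm E <= a.

Let E_entry_le i j : `|E i j| <= a.
Proof. exact: le_trans (le_max_norm E i j) E_le. Qed.

Lemma supp_hard_thr_perturb : supp (hard_thr a (S + E)) `<=` supp S.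
Proof.
move=> [i j]; rewrite /supp /= !mxE; apply: contraNN => /eqP S0.
by rewrite S0 add0r ltNge E_entry_le.
Qed.

Lemma max_norm_sub_hard_thr_perturb :
  max_norm (S - hard_thr a (S + E)) <= 2 * a.
Proof.
have a0 : 0 <= a := le_trans (max_norm_ge0 E) E_le.
apply: max_norm_le => [|i j]; first by rewrite mulr_ge0.
have Eij := E_entry_le i j; rewrite !mxE.
case: ltP => [_|killed].
  by rewrite opprD addNKr normrN; lra.
have : `|S i j| <= `|S i j + E i j| + `|E i j|.
  by rewrite -[X in `|X|](addrK (E i j)) ler_normB.
rewrite subr0; lra.
Qed.

End HardThresholdPerturbation.

Theorem lemma3 (R : realType) (n d r : nat)
  (F : 'M[R]_(d, n)) (UF : 'M[R]_d) (sF : 'rV[R]_d) (VF : 'M[R]_(n, d))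
  (mu cW : R) (z : nat)
  (Wst : 'M[R]_d) (Sst Nst Lprev : 'M[R]_n) (t : nat) :
  (0 < r)%N -> (r <= d)%N -> (d <= n)%N ->
  \rank F = d ->
  compact_svd F UF sF VF ->
  (forall i : 'I_n, rnorm2 (row i VF) <= mu * Num.sqrt (d%:R / n%:R)) ->
  let kappa := sv_max sF / sv_min sF in
  Wst^T = Wst -> \rank Wst = r -> spec_norm Wst <= cW ->
  let Lst := F^T *m Wst *m F in
  Sst^T = Sst ->
  (forall i : 'I_n, (#|[set j : 'I_n | Sst i j != 0%R]%SET| <= z)%N) ->
  (forall j : 'I_n, (#|[set i : 'I_n | Sst i j != 0%R]%SET| <= z)%N) ->
  z%:R <= n%:R / (20 * mu ^+ 2 * d%:R * kappa) ->
  Nst^T = Nst ->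
  max_norm Nst <= 1 / (40 * mu ^+ 2 * d%:R * kappa ^+ 2) ->
  let M := Lst + Sst + Nst in
  (1 <= t)%N ->
  let E := mu ^+ 2 * sv_max sF ^+ 2 * (d%:R / n%:R) * (cW / 5%:R ^+ t.-1) in
  let zeta := E + (3 * mu ^+ 2 * d%:R * kappa ^+ 2 + 1) * max_norm Nst in
  max_norm (Lst - Lprev) <= E + 3 * mu ^+ 2 * d%:R * kappa ^+ 2 * max_norm Nst ->
  let St := hard_thr zeta (M - Lprev) in
  max_norm (Sst - St) <=
    2 * E + 2 * (3 * mu ^+ 2 * d%:R * kappa ^+ 2 + 1) * max_norm Nst
  /\ supp St `<=` supp Sst.
Proof.
move=> _ _ _ _ _ _ kappa _ _ _ Lst _ _ _ _ _ _ M _ E zeta L_err St.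
have M_split : M - Lprev = Sst + ((Lst - Lprev) + Nst).
  by rewrite /M [Lst + Sst]addrC -!addrA [- Lprev + _]addrC.
have pert_le : max_norm ((Lst - Lprev) + Nst) <= zeta.
  apply: le_trans (le_max_normD _ _) _; rewrite /zeta; lra.
rewrite /St M_split; split; last exact: supp_hard_thr_perturb.
apply: le_trans (max_norm_sub_hard_thr_perturb _ pert_le) _.
by rewrite /zeta mulrDr mulrA.
Qed.
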